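(* Let $q\in(0,1)$, let $\alpha,p,j\ge0$ be integers and $0\le t\le p$. Then $$\sum_{M\in M^{(\alpha)}_{p,j}(t)}q^{\mathrm{cr}(M)}=\sum_{l=0}^{t}\sum_{i=0}^{l}q^{\,i(l-i)+(t-i)(j-i+\alpha)+(j-l+i)(t-l+i)}\frac{[t-l+i]_q!\,[t-i]_q!}{[t-l]_q!}\begin{bmatrix} p\\ t-i\end{bmatrix}_q\begin{bmatrix} p\\ t-l+i\end{bmatrix}_q\begin{bmatrix} \alpha+j\\ i\end{bmatrix}_q\begin{bmatrix} j\\ l-i\end{bmatrix}_q.$$
   Context: $[n]_q=\frac{1-q^n}{1-q}$, $[n]_q!=\prod_{m=1}^n[m]_q$, $\begin{bmatrix} n\\ m\end{bmatrix}_q=\frac{[n]_q!}{[m]_q![n-m]_q!}$ for $0\le m\le n$ and $=0$ if $m>n$ or $m<0$. Bipartite matchings: for integers $n,j,\alpha\ge0$, let $T_-=\{-\alpha-j,\dots,-1\}$, $T_+=\{1,\dots,n\}$ (top row), $B_-=\{-\tilde j,\dots,-\tilde 1\}$, $B_+=\{\tilde1,\dots,\tilde n\}$ (bottom row; $\tilde m$ is a formal copy of the integer $m$, bottom vertices compared via these integers). A bipartite matching is a set partition of $T_-\cup T_+\cup B_-\cup B_+$ into singletons (isolated vertices) and blocks $\{a,\tilde b\}$ with $a$ top, $\tilde b$ bottom (edges, written $(a,\tilde b)$). $M^{(\alpha)}_{n,j}$ is the set of such matchings with no edge between $T_-$ and $B_-$; $M^{(\alpha)}_{n,j}(l)$ its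 subset with exactly $l$ edges. The crossing number $\mathrm{cr}(M)$ is the total number of: (C1) unordered pairs of edges $(a,\tilde b),(c,\tilde d)$ with $a<c$ and $d<b$; (C2) pairs of an edge $(a,\tilde b)$ and an isolated top vertex $c$ with $c<a$; (C3) pairs of an edge $(a,\tilde b)$ and an isolated bottom vertex $\tilde d$ with $d<b$. *)

From HB Require Import structures.
From mathcomp Require Import all_boot all_order all_algebra.
Set Implicit Arguments. Unset Strict Implicit. Unset Printing Implicit Defensive.
Import Order.TTheory GRing.Theory Num.Theory.

Local Open Scope ring_scope.

Definition qint (R : fieldType) (q : R) (n : nat) : R := (1 - q ^+ n) / (1 - q).
Definition qfact (R : fieldType) (q : R) (n : nat) : R :=
  \prod_(1 <= m < n.+1) qint q m.
Definition qbinom (R : fieldType) (q : R) (n m : nat) : R :=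
  if (m <= n)%N then qfact q n / (qfact q m * qfact q (n - m)) else 0.

(* Top row: T_- = {-alpha-j,...,-1} and T_+ = {1,...,n}, encoded by
   'I_(alpha+j+n): index k < alpha+j is the vertex k-(alpha+j), index
   k >= alpha+j is the vertex k-(alpha+j)+1.  Bottom row: B_- = {-~j..-~1},
   B_+ = {~1..~n}, encoded by 'I_(j+n) likewise. *)
Definition topV (n j alpha : nat) := 'I_(alpha + j + n).
Definition botV (n j : nat) := 'I_(j + n).

Definition topz (n j alpha : nat) (k : topV n j alpha) : int :=
  if (k < alpha + j)%N then (k%:Z - (alpha + j)%:Z)%R else ((k - (alpha + j)).+1)%:Z.
Definition botz (n j : nat) (k : botV n j) : int :=
  if (k < j)%N then (k%:Z - j%:Z)%R else ((k - j).+1)%:Z.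

Definition in_Tminus (n j alpha : nat) (k : topV n j alpha) : bool := (k < alpha + j)%N.
Definition in_Bminus (n j : nat) (k : botV n j) : bool := (k < j)%N.

(* A bipartite matching is determined by its set of edges (a, ~b):
   every vertex lies in at most one edge; the remaining vertices are the
   singleton blocks. *)
Definition is_matching (n j alpha : nat)
    (M : {set topV n j alpha * botV n j}) : bool :=
  [forall e1 in M, forall e2 in M,
     ((e1.1 == e2.1) ==> (e1 == e2)) && ((e1.2 == e2.2) ==> (e1 == e2))]
  && [forall e in M, ~~ (in_Tminus e.1 && in_Bminus e.2)].

Definition isolated_top (n j alpha : nat) (M : {set topV n j alpha * botV n j})
    (c : topV n j alpha) : bool := [forall e in M, e.1 != c].
Definition isolated_bot (n j alpha : nat) (M : {set topV n j alpha * botV n j})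
    (d : botV n j) : bool := [forall e in M, e.2 != d].

(* Crossing number: (C1) pairs of edges (a,~b),(c,~d) with a<c, d<b
   (each unordered pair counted once, via the orientation a<c);
   (C2) edge (a,~b) and isolated top c with c<a;
   (C3) edge (a,~b) and isolated bottom ~d with d<b. *)
Definition cr (n j alpha : nat) (M : {set topV n j alpha * botV n j}) : nat :=
  (#|[set p : (topV n j alpha * botV n j) * (topV n j alpha * botV n j) |
       [&& p.1 \in M, p.2 \in M, (topz p.1.1 < topz p.2.1)%R
         & (botz p.2.2 < botz p.1.2)%R]]|
  + #|[set p : (topV n j alpha * botV n j) * topV n j alpha |
       [&& p.1 \in M, isolated_top M p.2 & (topz p.2 < topz p.1.1)%R]]|
  + #|[set p : (topV n j alpha * botV n j) * botV n j |
       [&& p.1 \in M, isolated_bot M p.2 & (botz p.2 < botz p.1.2)%R]]|)%N.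

Definition cr_genfun (R : fieldType) (q : R) (alpha n j l : nat) : R :=
  \sum_(M : {set topV n j alpha * botV n j} | is_matching M && (#|M| == l)%N)
    q ^+ cr M.

From HB Require Import structures.
From mathcomp Require Import all_boot all_order all_algebra zify ring.
Import Order.TTheory GRing.Theory Num.Theory.
Set Implicit Arguments. Unset Strict Implicit. Unset Printing Implicit Defensive.

(* Consider matchings between top vertices 'I_N and bottom vertices 'I_M in which no edge
   joins the first A top to the first B bottom vertices, and delete the leftmost top vertex.
   If it is free it lies left of each of the t edges (C2); if it is matched to b it crosses
   exactly b edges or free bottom vertices (C1/C3). This yields a q-Pascal recursion for the
   crossing generating function. Without forbidden box the recursion is solved by
   [M]_q [M-1]_q ... [M-t+1]_q * [N choose t]_q; peeling off the A forbidden top vertices one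
   at a time writes the general case as a sum over the number i of edges leaving the box, and
   the q-Vandermonde identity splits the remaining binomial along the number l - i of edges
   ending in B_-, giving the double sum. *)

Lemma forall_in_imset (T U : finType) (f : T -> U) (S : {set T}) (P : pred U) :
  [forall e in f @: S, P e] = [forall e in S, P (f e)].
Proof.
apply/forall_inP/forall_inP => H x Sx; first exact/H/imset_f.
by case/imsetP: Sx => y Sy ->; apply: H.
Qed.

Lemma forall_in_setU1 (T : finType) (a : T) (S : {set T}) (P : pred T) :
  [forall e in a |: S, P e] = P a && [forall e in S, P e].
Proof.
apply/forall_inP/andP => [H|[Pa H] x].
  by split; [apply/H/setU11 | apply/forall_inP => x Sx; apply/H/setU1r].
by case/setU1P => [->//|]; move: x; apply/forall_inP.
Qed.

Section Matchings.
Variables N M : nat.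
Implicit Types S : {set 'I_N * 'I_M}.

Definition edges_injective S : bool :=
  [forall e1 in S, forall e2 in S,
     ((e1.1 == e2.1) ==> (e1 == e2)) && ((e1.2 == e2.2) ==> (e1 == e2))].
Definition avoids_box A B S : bool := [forall e in S, ~~ ((e.1 < A) && (e.2 < B))%N].
Definition matching A B S : bool := edges_injective S && avoids_box A B S.
Definition top_free S c : bool := [forall e in S, e.1 != c].
Definition bot_free S d : bool := [forall e in S, e.2 != d].

Definition crossings S : nat :=
  \sum_(e in S) (\sum_(f in S) ((e.1 < f.1) && (f.2 < e.2))
    + \sum_(c < N) (top_free S c && (c < e.1)) + \sum_(d < M) (bot_free S d && (d < e.2))).

Lemma edges_injectiveP S :
  reflect (forall e1 e2, e1 \in S -> e2 \in S ->
             (e1.1 = e2.1 -> e1 = e2) /\ (e1.2 = e2.2 -> e1 = e2)) (edges_injective S).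
Proof.
apply: (iffP forall_inP) => H.
  move=> e1 e2 S1 S2; have /forall_inP/(_ e2 S2)/andP[H1 H2] := H e1 S1.
  by split=> E; apply/eqP; [move: H1|move: H2]; rewrite E eqxx.
move=> e1 S1; apply/forall_inP => e2 S2; have [H1 H2] := H e1 e2 S1 S2.
by apply/andP; split; apply/implyP => /eqP E; apply/eqP; auto.
Qed.

Lemma avoids_box0 A B S : (A == 0)%N || (B == 0)%N -> avoids_box A B S.
Proof. by move=> AB0; apply/forall_inP => e _; case/orP: AB0 => /eqP->; rewrite ?andbF. Qed.

Lemma sum_bot_lt S x : edges_injective S ->
  (\sum_(f in S) (f.2 < x) + \sum_(d < M) (bot_free S d && (d < x)) = minn x M)%N.
Proof.
move/edges_injectiveP => inj.
have -> : minn x M = (\sum_(d < M) (d < x))%N.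
  elim: M {S inj} => [|m IH]; first by rewrite big_ord0 minn0.
  by rewrite big_ord_recr /= -IH; case: (ltnP m x) => ?; lia.
rewrite (partition_big (fun f => f.2) predT) //= -big_split /=.
apply: eq_bigr => d _; case: (boolP (bot_free S d)) => [free|/forall_inPn[f0 Sf0]].
  rewrite big_pred0 //= => f; apply/andP => -[Sf /eqP fd].
  by move/forall_inP: free => /(_ f Sf); rewrite fd eqxx.
rewrite negbK => /eqP f0d; rewrite addn0 (big_pred1 f0) /= ?f0d // => f.
apply/andP/eqP => [[Sf /eqP fd]|->]; last by rewrite Sf0 f0d.
by case: (inj f f0 Sf Sf0) => _; apply; rewrite fd f0d.
Qed.

End Matchings.

Lemma ltn_bump2 h x y : (bump h x < bump h y)%N = (x < y)%N.
Proof. by rewrite !ltnNge leq_bump2. Qed.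

Section ConsFree.
Variables N M : nat.
Implicit Types S : {set 'I_N * 'I_M}.

Definition lift_top (e : 'I_N * 'I_M) : 'I_N.+1 * 'I_M := (lift ord0 e.1, e.2).
Definition cons_free S : {set 'I_N.+1 * 'I_M} := lift_top @: S.
Definition uncons_free (S : {set 'I_N.+1 * 'I_M}) : {set 'I_N * 'I_M} :=
  [set e | lift_top e \in S].

Lemma lift_top_inj : injective lift_top.
Proof. by move=> [a b] [c d] /eqP; rewrite xpair_eqE => /andP[/eqP/lift_inj/= -> /eqP/= ->]. Qed.

Lemma cons_freeK : cancel cons_free uncons_free.
Proof. by move=> S; apply/setP => e; rewrite inE mem_imset //; apply: lift_top_inj. Qed.

Lemma uncons_freeK (S : {set 'I_N.+1 * 'I_M}) :
  top_free S ord0 -> cons_free (uncons_free S) = S.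
Proof.
move=> /forall_inP free; apply/setP => -[a b]; apply/imsetP/idP.
  by case=> e; rewrite inE => Se ->.
case: (unliftP ord0 a) => [a' -> Sab|-> /free]; last by rewrite eqxx.
by exists (a', b); rewrite ?inE.
Qed.

Lemma card_cons_free S : #|cons_free S| = #|S|.
Proof. exact/card_imset/lift_top_inj. Qed.

Lemma top_free_cons_free0 S : top_free (cons_free S) ord0.
Proof. by rewrite /top_free forall_in_imset; apply/forall_inP. Qed.

Lemma top_free_cons_free S c : top_free (cons_free S) (lift ord0 c) = top_free S c.
Proof. by rewrite /top_free forall_in_imset; apply: eq_forallb => e; rewrite (inj_eq lift_inj). Qed.

Lemma bot_free_cons_free S d : bot_free (cons_free S) d = bot_free S d.
Proof. by rewrite /bot_free forall_in_imset. Qed.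

Lemma edges_injective_cons_free S : edges_injective (cons_free S) = edges_injective S.
Proof.
apply/edges_injectiveP/edges_injectiveP => inj e1 e2 S1 S2.
  have [H1 H2] := inj _ _ (imset_f lift_top S1) (imset_f lift_top S2).
  by split=> E; apply: lift_top_inj; [apply: H1; rewrite /= E | apply: H2].
case/imsetP: S1 => x1 Sx1 ->; case/imsetP: S2 => x2 Sx2 ->.
have [H1 H2] := inj x1 x2 Sx1 Sx2.
by split=> /= E; congr lift_top; [apply/H1/(lift_inj E) | apply: H2].
Qed.

Lemma avoids_box_cons_free A B S : avoids_box A B (cons_free S) = avoids_box A.-1 B S.
Proof.
rewrite /avoids_box forall_in_imset; apply: eq_forallb => e /=.
by rewrite /bump leq0n add1n; case: A.
Qed.

(* The new free top vertex lies left of every edge (C2). *)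
Lemma crossings_cons_free S : crossings (cons_free S) = (#|S| + crossings S)%N.
Proof.
rewrite /crossings big_imset /=; last by move=> x y _ _; apply: lift_top_inj.
rewrite -sum1_card -big_split /=; apply: eq_bigr => e _.
rewrite big_imset /=; last by move=> x y _ _; apply: lift_top_inj.
rewrite big_ord_recl top_free_cons_free0 /= /bump.
under eq_bigr do rewrite !leq0n !add1n ltnS.
under [in X in (_ + (_ + X) + _)%N]eq_bigr
  do rewrite top_free_cons_free /bump !leq0n !add1n ltnS.
under [in X in (_ + _ + X)%N]eq_bigr do rewrite bot_free_cons_free.
rewrite /=; lia.
Qed.

End ConsFree.

Section ConsEdge.
Variables (N M : nat) (b0 : 'I_M.+1).
Implicit Types S : {set 'I_N * 'I_M}.

Definition lift_edge (e : 'I_N * 'I_M) : 'I_N.+1 * 'I_M.+1 := (lift ord0 e.1, lift b0 e.2).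
Definition cons_edge S : {set 'I_N.+1 * 'I_M.+1} := (ord0, b0) |: lift_edge @: S.
Definition uncons_edge (S : {set 'I_N.+1 * 'I_M.+1}) : {set 'I_N * 'I_M} :=
  [set e | lift_edge e \in S].

Lemma lift_edge_inj : injective lift_edge.
Proof.
by move=> [a b] [c d] /eqP; rewrite xpair_eqE => /andP[/eqP/lift_inj/= -> /eqP/lift_inj/= ->].
Qed.

Lemma new_edge_notin S : (ord0, b0) \notin lift_edge @: S.
Proof. by apply/imsetP => -[e _ /eqP]; rewrite xpair_eqE (negbTE (neq_lift _ _)). Qed.

Lemma cons_edgeK : cancel cons_edge uncons_edge.
Proof.
move=> S; apply/setP => e; rewrite inE in_setU1 mem_imset; last exact: lift_edge_inj.
by rewrite xpair_eqE eq_sym (negbTE (neq_lift _ _)).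
Qed.

Lemma uncons_edgeK (S : {set 'I_N.+1 * 'I_M.+1}) :
  edges_injective S -> (ord0, b0) \in S -> cons_edge (uncons_edge S) = S.
Proof.
move=> /edges_injectiveP inj S0; apply/setP => -[a b]; apply/setU1P/idP.
  by case=> [->//|/imsetP[e]]; rewrite inE => Se ->.
move=> Sab; have [inj1 inj2] := inj _ _ Sab S0.
case: (unliftP ord0 a) => [a' Ea|Ea]; last by left; apply: inj1; rewrite Ea.
case: (unliftP b0 b) => [b' Eb|Eb]; last by left; apply: inj2; rewrite Eb.
by right; apply/imsetP; exists (a', b'); rewrite ?inE /lift_edge /= -?Ea -?Eb.
Qed.

Lemma card_cons_edge S : #|cons_edge S| = #|S|.+1.
Proof. by rewrite cardsU1 new_edge_notin card_imset //; apply: lift_edge_inj. Qed.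

Lemma top_free_cons_edge0 S : top_free (cons_edge S) ord0 = false.
Proof. by rewrite /top_free forall_in_setU1 eqxx. Qed.

Lemma top_free_cons_edge S c : top_free (cons_edge S) (lift ord0 c) = top_free S c.
Proof.
rewrite /top_free forall_in_setU1 forall_in_imset /=.
by apply: eq_forallb => e /=; rewrite (inj_eq lift_inj).
Qed.

Lemma bot_free_cons_edge0 S : bot_free (cons_edge S) b0 = false.
Proof. by rewrite /bot_free forall_in_setU1 eqxx. Qed.

Lemma bot_free_cons_edge S d : bot_free (cons_edge S) (lift b0 d) = bot_free S d.
Proof.
rewrite /bot_free forall_in_setU1 forall_in_imset /= neq_lift /=.
by apply: eq_forallb => e /=; rewrite (inj_eq lift_inj).
Qed.

Lemma edges_injective_cons_edge S : edges_injective (cons_edge S) = edges_injective S.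
Proof.
apply/edges_injectiveP/edges_injectiveP => inj e1 e2 S1 S2.
  have [H1 H2] := inj _ _ (setU1r _ (imset_f lift_edge S1)) (setU1r _ (imset_f lift_edge S2)).
  by split=> E; apply: lift_edge_inj; [apply: H1; rewrite /= E | apply: H2; rewrite /= E].
have new_neq e : ((ord0 : 'I_N.+1) != lift ord0 e.1) && (b0 != lift b0 e.2).
  by rewrite !neq_lift.
case/setU1P: S1 => [->|/imsetP[x1 Sx1 ->]]; case/setU1P: S2 => [->|/imsetP[x2 Sx2 ->]] //.
- by have /andP[/eqP? /eqP?] := new_neq x2; split.
- by have /andP[/eqP? /eqP?] := new_neq x1; split=> /esym.
have [H1 H2] := inj x1 x2 Sx1 Sx2.
by split=> /= /lift_inj E; congr lift_edge; [apply: H1 | apply: H2].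
Qed.

Lemma avoids_box_cons_edge A B S : (0 < A)%N || (B == 0)%N ->
  avoids_box A B (cons_edge S) = (B <= b0)%N && avoids_box A.-1 B S.
Proof.
move=> AB; rewrite /avoids_box forall_in_setU1 forall_in_imset /=.
have -> : ~~ ((0 < A)%N && (b0 < B)%N) = (B <= b0)%N.
  by case/orP: AB => [->|/eqP->]; rewrite ?ltn0 ?andbF // -leqNgt.
case: (leqP B b0) => // le_Bb0; apply: eq_forallb => e.
rewrite /bump leq0n add1n; case: A {AB} => [|A] //=; rewrite ltnS.
by congr (_ ==> ~~ (_ && _)); case: (leqP b0 e.2) => /= ?; lia.
Qed.

(* Each bottom vertex left of [b0] is either free (C3) or the end of an edge starting right
   of the new top vertex (C1), so the new edge adds exactly [b0] crossings. *)
Lemma crossings_cons_edge S :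
  edges_injective S -> crossings (cons_edge S) = (b0 + crossings S)%N.
Proof.
move=> inj; rewrite /crossings /cons_edge big_setU1 ?new_edge_notin //=.
rewrite big_imset /=; last by move=> x y _ _; apply: lift_edge_inj.
congr (_ + _)%N; last first.
  apply: eq_bigr => e _.
  rewrite big_setU1 ?new_edge_notin //= big_imset /=; last first.
    by move=> x y _ _; apply: lift_edge_inj.
  rewrite big_ord_recl top_free_cons_edge0 (bigD1_ord b0) //= bot_free_cons_edge0 /= !add0n.
  under eq_bigr do rewrite !ltn_bump2.
  under [in X in (_ + X + _)%N]eq_bigr do rewrite top_free_cons_edge ltn_bump2.
  by under [in X in (_ + _ + X)%N]eq_bigr do rewrite bot_free_cons_edge ltn_bump2.
rewrite big_setU1 ?new_edge_notin //= big_imset /=; last by move=> x y _ _; apply: lift_edge_inj.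
rewrite add0n [X in (_ + X + _)%N]big1 ?addn0 => [|c _]; last by rewrite ltn0 andbF.
rewrite (bigD1_ord b0) //= bot_free_cons_edge0 /= add0n.
have bump_lt x : (bump b0 x < b0)%N = (x < b0)%N by rewrite /bump; case: leqP => ?; lia.
under eq_bigr do rewrite bump_lt.
under [in X in (_ + X)%N]eq_bigr do rewrite bot_free_cons_edge bump_lt.
by rewrite sum_bot_lt //; apply/minn_idPl; rewrite -ltnS.
Qed.

End ConsEdge.

Lemma card_set_pairs (T1 T2 : finType) (S : {set T1}) (P : T1 -> T2 -> bool) :
  #|[set p : T1 * T2 | (p.1 \in S) && P p.1 p.2]| = \sum_(x in S) \sum_(y : T2) P x y.
Proof.
rewrite -sum1_card (eq_bigl (fun p => (p.1 \in S) && P p.1 p.2)) => [|p]; last by rewrite inE.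
rewrite -(pair_big_dep (mem S) P (fun _ _ => 1)) /=.
by apply: eq_bigr => x _; rewrite big_mkcond; apply: eq_bigr => y _; case: (P x y).
Qed.

Lemma topz_lt n j alpha (x y : topV n j alpha) : (topz x < topz y)%R = (x < y).
Proof. by rewrite /topz; case: ifP => ?; case: ifP => ?; lia. Qed.

Lemma botz_lt n j (x y : botV n j) : (botz x < botz y)%R = (x < y).
Proof. by rewrite /botz; case: ifP => ?; case: ifP => ?; lia. Qed.

Lemma cr_crossings n j alpha (M : {set topV n j alpha * botV n j}) : cr M = crossings M.
Proof.
rewrite /cr /crossings !big_split /=.
rewrite (card_set_pairs M
  (fun x y => [&& y \in M, (topz x.1 < topz y.1)%R & (botz y.2 < botz x.2)%R])).
rewrite (card_set_pairs M (fun x y => isolated_top M y && (topz y < topz x.1)%R)).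
rewrite (card_set_pairs M (fun x y => isolated_bot M y && (botz y < botz x.2)%R)).
congr (_ + _ + _); apply: eq_bigr => e _.
- rewrite [RHS]big_mkcond; apply: eq_bigr => f _.
  by case: (f \in M); rewrite //= topz_lt botz_lt.
- by apply: eq_bigr => c _; rewrite topz_lt.
- by apply: eq_bigr => d _; rewrite botz_lt.
Qed.

Local Open Scope ring_scope.

Section QAnalogs.
Variables (R : comPzRingType) (q : R).

Definition qnat n : R := \sum_(s < n) q ^+ s.
Definition qfac n : R := \prod_(m < n) qnat m.+1.
Definition qfall m k : R := \prod_(s < k) qnat (m - s).
Fixpoint qbin n k : R :=
  match n, k with
  | _, 0 => 1
  | 0, _.+1 => 0
  | n.+1, k.+1 => q ^+ k.+1 * qbin n k.+1 + qbin n k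
  end.

Lemma expr_pascal_shift a i t : (i < a)%N -> (i <= t)%N ->
  q ^+ t.+1 * q ^+ ((a - i.+1) * (t - i)) = q ^+ ((a - i) * (t - i)) * q ^+ i.+1.
Proof.
move=> lt_ia le_it; rewrite -!exprD (_ : (a - i = (a - i.+1).+1)%N); last by lia.
by congr (_ ^+ _); rewrite mulSn; lia.
Qed.

Lemma qnat0 : qnat 0 = 0. Proof. by rewrite /qnat big_ord0. Qed.

Lemma sum_expr_geq b m : \sum_(s < m | (b <= s)%N) q ^+ s = q ^+ b * qnat (m - b).
Proof.
have [le_bm|lt_mb] := leqP b m; last first.
  rewrite big_pred0 => [|s]; last by rewrite leqNgt (ltn_trans (ltn_ord s)).
  by rewrite (eqP (ltnW lt_mb)) qnat0 mulr0.
move: (m - b)%N (subnKC le_bm) => n <-.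
rewrite big_split_ord /= big_pred0 => [|s]; last by rewrite leqNgt ltn_ord.
by rewrite add0r big_distrr; apply: eq_big => [s|s _]; rewrite ?leq_addr ?exprD.
Qed.

Lemma qnatD a b : qnat (a + b) = qnat a + q ^+ a * qnat b.
Proof.
by rewrite /qnat big_split_ord big_distrr; congr (_ + _); apply: eq_bigr => s _; rewrite exprD.
Qed.

Lemma qfac0 : qfac 0 = 1. Proof. by rewrite /qfac big_ord0. Qed.
Lemma qfacS n : qfac n.+1 = qfac n * qnat n.+1. Proof. by rewrite /qfac big_ord_recr. Qed.

Lemma qfall0 m : qfall m 0 = 1. Proof. by rewrite /qfall big_ord0. Qed.

Lemma qfallS m k : qfall m k.+1 = qnat m * qfall m.-1 k.
Proof.
rewrite /qfall big_ord_recl subn0; congr (_ * _).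
by apply: eq_bigr => s _; rewrite /= /bump add1n; congr qnat; lia.
Qed.

Lemma qfallSr m k : qfall m k.+1 = qfall m k * qnat (m - k).
Proof. by rewrite /qfall big_ord_recr. Qed.

Lemma qfall_small m k : (m < k)%N -> qfall m k = 0.
Proof. by move=> lt_mk; rewrite /qfall (bigD1 (Ordinal lt_mk)) //= subnn qnat0 mul0r. Qed.

Lemma qfallD m a b : qfall m (a + b) = qfall m a * qfall (m - a) b.
Proof.
by rewrite /qfall big_split_ord /=; congr (_ * _); apply: eq_bigr => s _; rewrite subnDA.
Qed.

Lemma qfac_qfall n : qfac n = qfall n n.
Proof.
rewrite /qfac /qfall (reindex_inj rev_ord_inj) /=.
by apply: eq_bigr => s _; congr qnat; have := ltn_ord s; lia.
Qed.

Lemma qfac_split m k : (k <= m)%N -> qfac m = qfall m k * qfac (m - k).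
Proof. by move=> le_km; rewrite !qfac_qfall -qfallD subnKC. Qed.

Lemma qbin0 n : qbin n 0 = 1. Proof. by case: n. Qed.

Lemma qbinS n k : qbin n.+1 k.+1 = q ^+ k.+1 * qbin n k.+1 + qbin n k.
Proof. by []. Qed.

Lemma qbin_small n k : (n < k)%N -> qbin n k = 0.
Proof. by elim: n k => [|n IH] [|k] //= lt_nk; rewrite !IH ?mulr0 ?add0r // ltnW. Qed.

Lemma qfall_qbin m k : qfall m k = qfac k * qbin m k.
Proof.
elim: m k => [|m IH] [|k]; rewrite ?qfall0 ?qfac0 ?qbin0 ?mulr1 //.
  by rewrite qfallS qnat0 mul0r qbin_small ?mulr0.
rewrite qfallS qbinS mulrDr mulrCA -IH qfacS -mulrA mulrCA -IH /= qfallSr.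
have [le_km|lt_mk] := leqP k m; last by rewrite qfall_small //; ring.
rewrite (_ : m.+1 = k.+1 + (m - k))%N ?qnatD; [ring | lia].
Qed.

Lemma qbin_vandermonde b n t :
  qbin (b + n) t = \sum_(k < t.+1) q ^+ ((b - k) * (t - k)) * qbin b k * qbin n (t - k).
Proof.
elim: b t => [|b IH] t.
  rewrite big_ord_recl big1 => [|k _]; last by rewrite qbin_small ?mulr0 ?mul0r.
  by rewrite qbin0 mul0n expr0 !mul1r addr0 subn0.
case: t => [|t]; first by rewrite big_ord_recl big_ord0 !qbin0 muln0 expr0 !mulr1 addr0.
rewrite addSn qbinS !IH big_ord_recl [RHS]big_ord_recl mulrDr big_distrr -addrA /=.
congr (_ + _); first by rewrite !qbin0 !subn0 !mulr1 mulrA -exprD mulSn.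
rewrite -big_split /=; apply: eq_bigr => k _; rewrite /bump !add1n add0n !subSS.
have [lt_kb|le_bk] := ltnP k b; last by rewrite (@qbin_small b k.+1) ?ltnS //; ring.
by rewrite !mulrA (expr_pascal_shift lt_kb (ltn_ord k)); ring.
Qed.

End QAnalogs.

Definition matching_genfun (R : comPzRingType) (q : R) N M A B t : R :=
  \sum_(S : {set 'I_N * 'I_M} | matching A B S && (#|S| == t)) q ^+ crossings S.

Lemma cr_genfunE (R : fieldType) (q : R) alpha p j t :
  cr_genfun q alpha p j t = matching_genfun q (alpha + j + p) (j + p) (alpha + j) j t.
Proof. by apply: eq_bigr => M _; rewrite cr_crossings. Qed.

Section GenfunRecursion.
Variables (R : comPzRingType) (q : R).
Local Notation G := (matching_genfun q).

Lemma matching_genfun0 N M A B : G N M A B 0 = 1.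
Proof.
rewrite /matching_genfun (big_pred1 set0) ?/crossings ?big_set0 // => S.
rewrite cards_eq0 /=; apply/andP/eqP => [[_ /eqP]//|->]; split=> //.
by apply/andP; split; apply/forall_inP => e; rewrite inE.
Qed.

Lemma matching_genfun_top0 M A B t : G 0 M A B t.+1 = 0.
Proof.
rewrite /matching_genfun big_pred0 // => S; apply/andP => -[_ /eqP cardS].
by have := max_card S; rewrite cardS card_prod !card_ord.
Qed.

Lemma matching_genfun_bot0 N A B t : G N 0 A B t.+1 = 0.
Proof.
rewrite /matching_genfun big_pred0 // => S; apply/andP => -[_ /eqP cardS].
by have := max_card S; rewrite cardS card_prod !card_ord muln0.
Qed.

Lemma matching_genfun_box0 N M A B t :
  (A == 0)%N || (B == 0)%N -> G N M A B t = G N M 0 0 t.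
Proof. by move=> AB0; apply: eq_bigl => S; rewrite /matching !avoids_box0 ?eqxx ?orbT. Qed.

Lemma genfun_top_free N M A B t :
  \sum_(S : {set 'I_N.+1 * 'I_M} | (matching A B S && (#|S| == t)%N) && top_free S ord0)
    q ^+ crossings S = q ^+ t * G N M A.-1 B t.
Proof.
rewrite (reindex_onto (@cons_free N M) (@uncons_free N M)) => [|S /andP[_]]; last first.
  exact: uncons_freeK.
rewrite /matching_genfun big_distrr; apply: eq_big => S.
  by rewrite cons_freeK eqxx top_free_cons_free0 !andbT /matching
    edges_injective_cons_free avoids_box_cons_free card_cons_free.
by case/andP=> /andP[/andP[_ /eqP<-] _] _; rewrite crossings_cons_free card_cons_free exprD.
Qed.

Definition top_mate N M (S : {set 'I_N.+1 * 'I_M.+1}) : 'I_M.+1 :=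
  odflt ord0 [pick b | (ord0, b) \in S].

Lemma top_mateP N M A B (S : {set 'I_N.+1 * 'I_M.+1}) b0 : matching A B S ->
  ~~ top_free S ord0 && (top_mate S == b0) = ((ord0, b0) \in S).
Proof.
case/andP=> /edges_injectiveP inj _; rewrite /top_mate; case: pickP => [b Sb|none] /=.
  have -> /= : ~~ top_free S ord0 by apply/forall_inPn; exists (ord0, b); rewrite ?negbK.
  by apply/eqP/idP => [<-//|Sb0]; case: (inj _ _ Sb0 Sb) => /(_ erefl) [->].
rewrite (none b0); suff -> : top_free S ord0 by [].
apply/forall_inP => -[a b] Sab /=; apply: contraTneq Sab => ->; exact/negbT/none.
Qed.

Lemma genfun_top_matched N M A B t : (0 < A)%N || (B == 0)%N ->
  \sum_(S : {set 'I_N.+1 * 'I_M.+1} |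
           (matching A B S && (#|S| == t.+1)%N) && ~~ top_free S ord0) q ^+ crossings S
  = (\sum_(b < M.+1 | (B <= b)%N) q ^+ b) * G N M A.-1 B t.
Proof.
move=> AB; rewrite (partition_big (@top_mate N M) predT) //= big_distrl /= [RHS]big_mkcond /=.
apply: eq_bigr => b0 _.
rewrite (eq_bigl (fun S => matching A B S && (#|S| == t.+1)%N && ((ord0, b0) \in S))); last first.
  by move=> S; rewrite -andbA; case: (boolP (matching A B S)) => //= MS; rewrite -(top_mateP b0 MS).
rewrite (reindex_onto (@cons_edge N M b0) (@uncons_edge N M b0)); last first.
  by move=> S /andP[/andP[/andP[inj _] _] S0]; apply: uncons_edgeK.
case: ifP => le_Bb0; last first.
  by rewrite big_pred0 // => S; rewrite /matching avoids_box_cons_edge // le_Bb0 !andbF.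
rewrite /matching_genfun big_distrr; apply: eq_big => S.
  by rewrite cons_edgeK eqxx setU11 !andbT /matching edges_injective_cons_edge
    avoids_box_cons_edge // card_cons_edge le_Bb0.
case/andP=> /andP[/andP[/andP[inj _] _] _] _; rewrite edges_injective_cons_edge in inj.
by rewrite crossings_cons_edge // exprD.
Qed.

Lemma matching_genfun_rec N M A B t : (0 < A)%N || (B == 0)%N ->
  G N.+1 M.+1 A B t.+1 = q ^+ t.+1 * G N M.+1 A.-1 B t.+1
    + (\sum_(b < M.+1 | (B <= b)%N) q ^+ b) * G N M A.-1 B t.
Proof.
move=> AB; rewrite {1}/matching_genfun (bigID (fun S => top_free S ord0)) /=.
by rewrite genfun_top_free genfun_top_matched.
Qed.
End GenfunRecursion.

Lemma closed_exponent A i j k t : (k <= j)%N -> (i + k <= t)%N ->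
  ((A - i) * (t - i) + i * j + (j - k) * (t - i - k)
   = i * k + (t - i) * (A - i) + (j - k) * (t - k))%N.
Proof.
move=> /subnKC <- /subnKC <-; move: (j - k)%N (t - (i + k))%N (A - i)%N => a b c.
by rewrite [in (i + k + b - k)%N]addnAC addnK -[(i + k + b)%N]addnA !addKn; ring.
Qed.

Lemma sum_triangle (R : nmodType) (F : nat -> nat -> R) n :
  \sum_(l < n) \sum_(i < l.+1) F l i = \sum_(i < n) \sum_(k < n - i) F (i + k)%N i.
Proof.
elim: n => [|n IH]; first by rewrite !big_ord0.
rewrite big_ord_recr /= IH.
transitivity (\sum_(i < n.+1) (\sum_(k < n - i) F (i + k)%N i + F n i)).
  by rewrite big_split /= [X in _ = X + _]big_ord_recr /= subnn big_ord0 addr0.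
apply: eq_bigr => -[i /= lt_in] _; rewrite subSn // big_ord_recr /=.
by congr (_ + F _ _); lia.
Qed.

Section ClosedForm.
Variables (R : comPzRingType) (q : R).
Local Notation G := (matching_genfun q).
Local Notation qnat := (qnat q).
Local Notation qfall := (qfall q).
Local Notation qbin := (qbin q).

Lemma matching_genfun_box_rec N M A B t :
  G N.+1 M A.+1 B t.+1 = q ^+ t.+1 * G N M A B t.+1 + q ^+ B * qnat (M - B) * G N M.-1 A B t.
Proof.
case: M => [|M]; first by rewrite !matching_genfun_bot0 sub0n qnat0; ring.
by rewrite matching_genfun_rec // sum_expr_geq.
Qed.

Lemma matching_genfun_free N M t : G N M 0 0 t = qfall M t * qbin N t.
Proof.
elim: N M t => [|N IH] M [|t]; rewrite ?matching_genfun0 ?qfall0 ?qbin0 ?mulr1 //.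
  by rewrite matching_genfun_top0 qbin_small ?mulr0.
rewrite -(@matching_genfun_box0 _ q N.+1 M 1 0) // matching_genfun_box_rec subn0 !IH.
by rewrite qfallS qbinS; ring.
Qed.

Definition box_weight (A B n t i : nat) : R :=
  q ^+ ((A - i) * (t - i) + i * B) * qfall n i * qbin A i.

Lemma box_weight0 A B n t : box_weight A B n t 0 = q ^+ (A * t).
Proof. by rewrite /box_weight !subn0 mul0n addn0 qfall0 qbin0 !mulr1. Qed.

Lemma box_weightS A B n t i : (i <= t)%N ->
  q ^+ t.+1 * box_weight A B n t.+1 i.+1 + q ^+ B * qnat n * box_weight A B n.-1 t i
  = box_weight A.+1 B n t.+1 i.+1.
Proof.
move=> le_it; rewrite /box_weight !subSS qfallS qbinS.
have eB : q ^+ ((A - i) * (t - i) + i.+1 * B) = q ^+ B * q ^+ ((A - i) * (t - i) + i * B).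
  by rewrite -exprD mulSn; congr (_ ^+ _); lia.
have [lt_iA|le_Ai] := ltnP i A; last by rewrite (@qbin_small _ q A i.+1) ?ltnS // eB; ring.
have e1 : q ^+ t.+1 * q ^+ ((A - i.+1) * (t - i) + i.+1 * B)
          = q ^+ ((A - i) * (t - i) + i.+1 * B) * q ^+ i.+1.
  by rewrite !exprD mulrA expr_pascal_shift //; ring.
by rewrite !mulrA e1 eB; ring.
Qed.

(* Induction on the number [A] of top vertices that are forbidden to meet the first [B] bottom
   vertices; [i] counts the edges leaving that box. *)
Lemma matching_genfun_box A B n M t :
  G (A + n) M A B t = \sum_(i < t.+1) box_weight A B (M - B) t i * G n (M - i) 0 0 (t - i)%N.
Proof.
elim: A M t => [|A IH] M t.
  rewrite big_ord_recl big1 => [|i _]; last by rewrite /box_weight qbin_small ?mulr0 ?mul0r.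
  by rewrite box_weight0 mul0n expr0 mul1r addr0 !subn0 (@matching_genfun_box0 _ q _ _ 0).
case: t => [|t].
  by rewrite big_ord_recl big_ord0 !matching_genfun0 box_weight0 muln0 expr0 addr0 mulr1.
rewrite addSn matching_genfun_box_rec !IH big_ord_recl [RHS]big_ord_recl mulrDr -addrA.
congr (_ + _); first by rewrite mulrA !box_weight0 -exprD mulSn.
rewrite [q ^+ t.+1 * _]mulr_sumr [q ^+ B * _ * _]mulr_sumr -big_split.
apply: eq_bigr => i _; rewrite /= /bump add1n !subSS.
rewrite -!predn_sub -[((M - i).-1)%N]subnS -(box_weightS _ _ _ (ltn_ord i : (i <= t)%N)).
by rewrite mulrDl !mulrA.
Qed.

Definition closed_summand A j p t l i : R :=
  q ^+ (i * (l - i) + (t - i) * (A - i) + (j - (l - i)) * (t - (l - i)))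
  * qfall (t - i) (l - i) * qfall p (t - l + i)
  * qbin p (t - i) * qbin A i * qbin j (l - i).

Lemma matching_genfun_closed A j p t : (t <= p)%N ->
  G (A + p) (j + p) A j t = \sum_(l < t.+1) \sum_(i < l.+1) closed_summand A j p t l i.
Proof.
move=> le_tp; rewrite matching_genfun_box addKn sum_triangle.
apply: eq_bigr => -[i /= lt_it] _.
rewrite matching_genfun_free (_ : j + p - i = j + (p - i))%N; last by lia.
rewrite qfall_qbin qbin_vandermonde subSn // mulr_sumr mulr_suml mulr_sumr.
apply: eq_bigr => -[k /= lt_kti] _; rewrite /closed_summand addKn.
have [lt_jk|le_kj] := ltnP j k; first by rewrite (@qbin_small _ q j k) //; ring.
rewrite (qfac_split _ (_ : k <= t - i)%N) // -closed_exponent //; last by lia.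
rewrite (_ : t - (i + k) + i = i + (t - i - k))%N; last by lia.
by rewrite qfallD (qfall_qbin _ (p - i)%N) /box_weight !exprD; ring.
Qed.
End ClosedForm.

Lemma qint_qnat (R : fieldType) (q : R) n : q != 1 -> qint q n = qnat q n.
Proof.
rewrite eq_sym -subr_eq0 => q1; apply: (mulIf q1); rewrite mulfVK //.
apply: oppr_inj; rewrite opprB subrX1 /qnat; ring.
Qed.

Lemma qfact_qfac (R : fieldType) (q : R) n : q != 1 -> qfact q n = qfac q n.
Proof.
move=> q1; rewrite /qfact /qfac big_add1 /= big_mkord.
by apply: eq_bigr => m _; apply: qint_qnat.
Qed.

Lemma qfac_gt0 (R : numDomainType) (q : R) n : 0 <= q -> 0 < qfac q n.
Proof.
move=> q_ge0; apply: prodr_gt0 => m _; rewrite /qnat big_ord_recl expr0 ltr_pwDl //.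
by apply: sumr_ge0 => s _; apply: exprn_ge0.
Qed.

Lemma qbinom_qbin (R : numFieldType) (q : R) n m :
  0 <= q -> q != 1 -> qbinom q n m = qbin q n m.
Proof.
move=> q_ge0 q1; rewrite /qbinom; case: leqP => [le_mn|lt_nm]; last by rewrite qbin_small.
have qfac_neq0 k : qfac q k != 0 by rewrite gt_eqF ?qfac_gt0.
rewrite !qfact_qfac // (qfac_split _ le_mn) qfall_qbin; field.
by rewrite !qfac_neq0.
Qed.

Lemma crossing_exponentE alpha j t l i :
  (i <= l <= t)%N -> (l - i <= j)%N -> (i <= alpha + j)%N ->
  (i%:Z * (l%:Z - i%:Z)) + (t%:Z - i%:Z) * (j%:Z - i%:Z + alpha%:Z)
    + (j%:Z - l%:Z + i%:Z) * (t%:Z - l%:Z + i%:Z)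
  = (i * (l - i) + (t - i) * (alpha + j - i) + (j - (l - i)) * (t - (l - i)))%N :> int.
Proof.
move=> /andP[le_il le_lt] le_lij le_ij.
by rewrite !PoszD !PoszM -!subzn ?PoszD //; [ring | lia ..].
Qed.

Unset Implicit Arguments.

Theorem mainTheorem12 (R : realFieldType) (q : R) (hq0 : 0 < q) (hq1 : q < 1)
    (alpha p j t : nat) (htp : (t <= p)%N) :
  cr_genfun q alpha p j t =
  \sum_(l < t.+1) \sum_(i < l.+1)
    q ^ ((i%:Z * (l%:Z - i%:Z)) + (t%:Z - i%:Z) * (j%:Z - i%:Z + alpha%:Z)
         + (j%:Z - l%:Z + i%:Z) * (t%:Z - l%:Z + i%:Z))%R
    * (qfact q (t - l + i) * qfact q (t - i) / qfact q (t - l))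
    * qbinom q p (t - i) * qbinom q p (t - l + i)
    * qbinom q (alpha + j) i * qbinom q j (l - i).
Proof.
have q_ge0 := ltW hq0; have q_neq1 : q != 1 by rewrite lt_eqF.
rewrite cr_genfunE matching_genfun_closed //.
apply: eq_bigr => -[l /= lt_lt] _; apply: eq_bigr => -[i /= lt_il] _.
rewrite /closed_summand !qfact_qfac // !qbinom_qbin //.
have [lt_j|le_lij] := ltnP j (l - i); first by rewrite (@qbin_small _ q j) // !mulr0.
have [lt_Ai|le_iA] := ltnP (alpha + j) i.
  by rewrite (@qbin_small _ q _ i) // !(mulr0, mul0r).
rewrite crossing_exponentE //; last by lia.
rewrite -exprnP (qfac_split _ (_ : l - i <= t - i)%N); last by lia.
rewrite (_ : t - i - (l - i) = t - l)%N ?(qfall_qbin _ p); last by lia.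
by field; rewrite gt_eqF ?qfac_gt0.
Qed.
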